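(* Let $k$ be a commutative ring and $A$ a commutative $k$-algebra such that $\operatorname{Der}_k(A)$ is a finitely generated $A$-module and $\operatorname{Ider}_k(A)=\operatorname{Der}_k(A)$. Then for each integer $m\ge1$, every Hasse–Schmidt derivation $D'\in\operatorname{HS}_k(A;m)$ is $(m+1)$-integrable, i.e. there exists $D\in\operatorname{HS}_k(A;m+1)$ with $\tau_{m+1,m}(D)=D'$; consequently every $D'\in\operatorname{HS}_k(A;m)$ is integrable (is the truncation of some element of $\operatorname{HS}_k(A;\infty)$).
   Context: For $m\ge1$ an integer or $m=\infty$, a Hasse–Schmidt derivation of $A$ over $k$ of length $m$ is a sequence $D=(D_0,\dots,D_m)$ of $k$-linear maps $A\to A$ with $D_0=\mathrm{Id}_A$ and $D_i(xy)=\sum_{r+s=i}D_r(x)D_s(y)$; their set is $\operatorname{HS}_k(A;m)$. For $m\le q$, $\tau_{qm}(D)=(D_0,\dots,D_m)$. A derivation $\delta\in\operatorname{Der}_k(A)$ is integrable if $\delta=D_1$ for some $D\in\operatorname{HS}_k(A;\infty)$; $\operatorname{Ider}_k(A)$ denotes the set of integrable derivations. An element $D'\in\operatorname{HS}_k(A;m)$ is $q$-integrable ($q\ge m$) if $D'=\tau_{qm}(D)$ for some $D\in\operatorname{HS}_k(A;q)$. *)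

From HB Require Import structures.
From mathcomp Require Import all_boot all_order all_algebra.
Set Implicit Arguments. Unset Strict Implicit. Unset Printing Implicit Defensive.
Import GRing.Theory.
Local Open Scope ring_scope.

(* A commutative k-algebra A is given by its structure morphism
   phi : k -> A (a ring morphism between commutative rings).
   k-linearity of f : A -> A means additivity and f (phi a * x) = phi a * f x. *)
Definition klinear (k A : comPzRingType) (phi : {rmorphism k -> A})
    (f : A -> A) : Prop :=
  (forall x y : A, f (x + y) = f x + f y) /\
  (forall (a : k) (x : A), f (phi a * x) = phi a * f x).

Definition isDer (k A : comPzRingType) (phi : {rmorphism k -> A})
    (d : A -> A) : Prop :=
  klinear phi d /\ (forall x y : A, d (x * y) = x * d y + d x * y).

(* A Hasse-Schmidt derivation of length m is represented by a sequence
   D : nat -> (A -> A) of which only the components D 0, ..., D m matter. *)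
Definition isHS (k A : comPzRingType) (phi : {rmorphism k -> A}) (m : nat)
    (D : nat -> A -> A) : Prop :=
  (forall x, D 0%N x = x) /\
  (forall i, (i <= m)%N -> klinear phi (D i)) /\
  (forall i, (i <= m)%N -> forall x y : A,
      D i (x * y) = \sum_(r < i.+1) D r x * D (i - r)%N y).

Definition isHSinf (k A : comPzRingType) (phi : {rmorphism k -> A})
    (D : nat -> A -> A) : Prop :=
  (forall x, D 0%N x = x) /\
  (forall i, klinear phi (D i)) /\
  (forall i (x y : A), D i (x * y) = \sum_(r < i.+1) D r x * D (i - r)%N y).

Definition truncates_to (A : Type) (m : nat) (D D' : nat -> A -> A) : Prop :=
  forall i, (i <= m)%N -> forall x, D i x = D' i x.

Definition Der_fg (k A : comPzRingType) (phi : {rmorphism k -> A}) : Prop :=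
  exists (n : nat) (g : 'I_n -> A -> A),
    (forall j, isDer phi (g j)) /\
    (forall d, isDer phi d ->
       exists c : 'I_n -> A, forall x, d x = \sum_(j < n) c j * g j x).

Definition all_Der_integrable (k A : comPzRingType) (phi : {rmorphism k -> A})
    : Prop :=
  forall d, isDer phi d ->
    exists D, isHSinf phi D /\ forall x, D 1%N x = d x.

From HB Require Import structures.
From mathcomp Require Import all_boot all_order all_algebra.
Set Implicit Arguments. Unset Strict Implicit. Unset Printing Implicit Defensive.
Import GRing.Theory.
Local Open Scope ring_scope.

(* Every Hasse-Schmidt derivation D of finite length m is the truncation of
   one of infinite length, provided every k-derivation is integrable; the
   (m+1)-integrability is then obtained by truncating again.

   Hasse-Schmidt derivations (of any length) form a group under the
   composition (F o G)_i = sum_{r+s=i} F_r G_s, with unit (Id, 0, 0, ...).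
   If D_1 = ... = D_(n-1) = 0, then D_n is a derivation; integrate it to
   E in HS(A; oo) and dilate, H_(jn) = E_j (the substitution t |-> t^n), so
   that H_1 = ... = H_(n-1) = 0 and H_n = D_n.  Then F := D o H^-1 satisfies
   F_1 = ... = F_n = 0 and D = F o H.  Iterating, the first nonzero index
   exceeds m after finitely many steps, where the identity truncates to F. *)

Section AntidiagonalSums.
Variable A : comPzRingType.

Definition adsum (n : nat) (g : nat -> nat -> A) : A :=
  \sum_(a < n.+1) g a (n - a)%N.

Lemma eq_adsum n f g :
  (forall a, (a <= n)%N -> f a (n - a)%N = g a (n - a)%N) -> adsum n f = adsum n g.
Proof. by move=> efg; apply: eq_bigr => a _; apply: efg; rewrite -ltnS. Qed.

Lemma adsum0 g : adsum 0%N g = g 0%N 0%N.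
Proof. by rewrite /adsum big_ord1. Qed.

Lemma adsumS n g : adsum n.+1 g = adsum n (fun a b => g a b.+1) + g n.+1 0%N.
Proof.
rewrite /adsum big_ord_recr /= subnn; congr (_ + _).
by apply: eq_bigr => a _ /=; rewrite subSn // -ltnS.
Qed.

Lemma adsumD n f g : adsum n (fun a b => f a b + g a b) = adsum n f + adsum n g.
Proof. by rewrite /adsum big_split. Qed.

Lemma adsumC n g : adsum n g = adsum n (fun a b => g b a).
Proof.
rewrite /adsum (reindex_inj rev_ord_inj) /=; apply: eq_bigr => a _.
by rewrite subSS subKn // -ltnS.
Qed.

(* Associativity: both sides are the sum over a+b+c = n. *)
Lemma adsumA n (h : nat -> nat -> nat -> A) :
  adsum n (fun a b => adsum a (fun c d => h c d b)) =
  adsum n (fun a b => adsum b (fun c d => h a c d)).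
Proof.
elim: n h => [|n IH] h; first by rewrite /adsum !big_ord1.
rewrite adsumS /= (IH (fun c d b => h c d b.+1)) [in RHS]adsumS /= adsum0.
have -> : adsum n (fun a b => adsum b.+1 (fun c d => h a c d)) =
   adsum n (fun a b => adsum b (fun c d => h a c d.+1)) +
   adsum n (fun a b => h a b.+1 0%N).
  by rewrite -adsumD; apply: eq_adsum => a _; rewrite adsumS.
by rewrite adsumS /= addrA.
Qed.

Lemma adsum_mul n d f g :
  adsum n f * adsum d g = adsum n (fun p u => adsum d (fun q v => f p u * g q v)).
Proof. by rewrite /adsum mulr_suml; apply: eq_bigr => a _; rewrite mulr_sumr. Qed.

(* This is
   what makes the composition of Hasse-Schmidt derivations multiplicative. *)
Lemma adsum_interchange n (T : nat -> nat -> nat -> nat -> A) :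
  adsum n (fun c d => adsum c (fun p u => adsum d (fun q v => T p u q v))) =
  adsum n (fun r s => adsum s (fun u v => adsum r (fun p q => T p u q v))).
Proof.
rewrite (adsumA n (fun p u d => adsum d (fun q v => T p u q v))).
transitivity (adsum n (fun p t => adsum t (fun w v => adsum w (fun q u => T p u q v)))).
  apply: eq_adsum => p _; rewrite -(adsumA _ (fun u q v => T p u q v)).
  by apply: eq_adsum => w _; rewrite adsumC.
rewrite -(adsumA n (fun p w v => adsum w (fun q u => T p u q v))).
transitivity (adsum n (fun z v => adsum z (fun e u => adsum e (fun p q => T p u q v)))).
  apply: eq_adsum => z _.
  by rewrite -(adsumA _ (fun p q u => T p u q (n - z)%N)).
by rewrite (adsumA n (fun e u v => adsum e (fun p q => T p u q v))).
Qed.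

Lemma sum_ends i (g : nat -> A) : (0 < i)%N ->
  (forall r, (0 < r < i)%N -> g r = 0) -> \sum_(r < i.+1) g r = g 0%N + g i.
Proof.
case: i => // i _ g0.
rewrite big_ord_recl big_ord_recr /= big1 ?add0r // => a _.
by apply: g0; rewrite /= ltnS ltn_ord.
Qed.

Lemma sum_delta N c (F : 'I_N -> A) (g : nat -> A) :
  (forall a : 'I_N, F a = if a == c :> nat then g c else 0) ->
  \sum_(a < N) F a = if (c < N)%N then g c else 0.
Proof.
move=> eF; rewrite (eq_bigr _ (fun a _ => eF a)) -big_mkcond.
case: ltnP => cN; first by rewrite (big_pred1 (Ordinal cN)).
rewrite big_pred0 // => a; apply/negbTE; apply: contraTneq cN => <-.
by rewrite -ltnNge.
Qed.

Lemma adsum_dilate n j (f : nat -> nat -> A) : (0 < n)%N ->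
  adsum (j * n) (fun r s => if ((n %| r) && (n %| s))%N then f (r %/ n)%N (s %/ n)%N else 0)
  = adsum j f.
Proof.
move=> n_gt0; rewrite {1}/adsum.
transitivity (\sum_(r < (j * n).+1) \sum_(a < j.+1)
                 (if r == (a * n)%N :> nat then f a (j - a)%N else 0)).
  apply: eq_bigr => r _.
  have r_le : (r <= j * n)%N := ltn_ord r.
  case: (boolP (n %| r)%N) => [n_r|n_Nr]; last first.
    symmetry; apply: big1 => a _.
    by case: eqP => // er; move: n_Nr; rewrite er dvdn_mull.
  have er : nat_of_ord r = (r %/ n * n)%N by rewrite divnK.
  have n_jr : (n %| j * n - r)%N by rewrite dvdn_sub ?dvdn_mull.
  rewrite n_jr /=.
  have -> : ((j * n - r) %/ n = j - r %/ n)%N by rewrite {1}er -mulnBl mulnK.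
  symmetry; rewrite (@sum_delta _ (r %/ n) _ (fun a => f a (j - a)%N)).
    by rewrite ltnS leq_divLR // r_le.
  by move=> a; rewrite {1}er eqn_pmul2r // eq_sym; case: eqP => [->|].
rewrite exchange_big /=; apply: eq_bigr => a _.
rewrite (@sum_delta _ (a * n) _ (fun _ => f a (j - a)%N)) //.
by rewrite ltnS leq_mul2r -ltnS ltn_ord orbT.
Qed.

End AntidiagonalSums.

Section KLinear.
Variables (k A : comPzRingType) (phi : {rmorphism k -> A}).

Lemma klinear_ext f g : (forall x, f x = g x) -> klinear phi g -> klinear phi f.
Proof. by move=> efg [gD gZ]; split=> *; rewrite !efg ?gD ?gZ. Qed.

Lemma klinear0 f : klinear phi f -> f 0 = 0.
Proof. by move=> [fD _]; apply: (addrI (f 0)); rewrite addr0 -fD addr0. Qed.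

Lemma klinear_adsum f n g : klinear phi f ->
  f (adsum n g) = adsum n (fun a b => f (g a b)).
Proof. by move=> fL; rewrite /adsum (big_morph f fL.1 (klinear0 fL)). Qed.

Lemma klinear_id : klinear phi id.
Proof. by []. Qed.

Lemma klinear_zero : klinear phi (fun _ => 0).
Proof. by split=> *; rewrite ?addr0 ?mulr0. Qed.

Lemma klinear_comp f g : klinear phi f -> klinear phi g -> klinear phi (fun x => f (g x)).
Proof. by move=> [fD fZ] [gD gZ]; split=> *; rewrite ?gD ?fD ?gZ ?fZ. Qed.

Lemma klinear_opp f : klinear phi f -> klinear phi (fun x => - f x).
Proof. by move=> [fD fZ]; split=> *; rewrite ?fD ?fZ ?opprD ?mulrN. Qed.

Lemma klinear_sum n (F : 'I_n -> A -> A) : (forall i, klinear phi (F i)) ->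
  klinear phi (fun x => \sum_(i < n) F i x).
Proof.
move=> FL; split=> *.
  by rewrite -big_split; apply: eq_bigr => i _; rewrite (FL i).1.
by rewrite mulr_sumr; apply: eq_bigr => i _; rewrite (FL i).2.
Qed.

End KLinear.

Section HSGroup.
Variables (k A : comPzRingType) (phi : {rmorphism k -> A}).

Definition hs_comp (F G : nat -> A -> A) : nat -> A -> A :=
  fun i x => adsum i (fun r s => F r (G s x)).

Definition hs_id : nat -> A -> A := fun i x => if i == 0%N then x else 0.

Definition vanishes_below (D : nat -> A -> A) (n : nat) : Prop :=
  forall i, (0 < i < n)%N -> forall x, D i x = 0.

Lemma isHSinfP D : isHSinf phi D <-> forall m, isHS phi m D.
Proof.
split=> [[D0 [DL DM]] m|HD]; first by split; [|split=> i _; [apply: DL|apply: DM]].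
split; first by case: (HD 0%N).
split=> i; first by case: (HD i) => _ [/(_ i (leqnn i))].
by case: (HD i) => _ [_ /(_ i (leqnn i))].
Qed.

Lemma isHS_leibniz m D i x y : isHS phi m D -> (i <= m)%N ->
  D i (x * y) = adsum i (fun r s => D r x * D s y).
Proof. by move=> [_ [_ DM]] /DM; apply. Qed.

Lemma isHSinf_leibniz D i x y : isHSinf phi D ->
  D i (x * y) = adsum i (fun r s => D r x * D s y).
Proof. by move=> [_ [_ DM]]; apply: DM. Qed.

Lemma hs_comp_klinear F G i : (forall r, (r <= i)%N -> klinear phi (F r)) ->
  (forall r, (r <= i)%N -> klinear phi (G r)) -> klinear phi (hs_comp F G i).
Proof.
move=> FL GL; rewrite /hs_comp /adsum.
apply: (klinear_sum (F := fun (a : 'I_i.+1) x => F a (G (i - a)%N x))) => a.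
by apply: klinear_comp; [apply: FL; rewrite -ltnS | apply: GL; rewrite leq_subr].
Qed.

Lemma hs_comp_mul_expand (F G : nat -> A -> A) x y i :
  adsum i (fun c d => hs_comp F G c x * hs_comp F G d y) =
  adsum i (fun r s => adsum s (fun u v => adsum r (fun p q => F p (G u x) * F q (G v y)))).
Proof.
rewrite -adsum_interchange; apply: eq_adsum => c _.
by rewrite /hs_comp adsum_mul.
Qed.

Lemma hs_comp_HS m F G : isHS phi m F -> isHS phi m G -> isHS phi m (hs_comp F G).
Proof.
move=> HF HG; split; first by move=> x; rewrite /hs_comp adsum0 HG.1 HF.1.
split=> [i i_le|i i_le x y].
  by apply: hs_comp_klinear => r r_le; [apply: HF.2.1|apply: HG.2.1];
     exact: leq_trans i_le.
rewrite -[\sum_(r < i.+1) _]/(adsum i (fun c d => hs_comp F G c x * hs_comp F G d y)).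
rewrite hs_comp_mul_expand /hs_comp; apply: eq_adsum => r r_le.
rewrite (isHS_leibniz _ _ HG); last by rewrite (leq_trans (leq_subr _ _)).
rewrite (klinear_adsum _ _ (HF.2.1 r (leq_trans r_le i_le))).
apply: eq_adsum => u _.
by rewrite (isHS_leibniz _ _ HF) // (leq_trans r_le).
Qed.

Lemma hs_id_HS : isHSinf phi hs_id.
Proof.
apply/isHSinfP => m; split=> //; split=> [i _|i _ x y].
  by rewrite /hs_id; case: (i == 0%N); [apply: klinear_id | apply: klinear_zero].
rewrite /hs_id; case: i => [|i] /=; first by rewrite big_ord1.
rewrite big1 // => a _; case: (nat_of_ord a == 0%N) / eqP => [->|]; last by rewrite mul0r.
by rewrite subn0 /= mulr0.
Qed.

Lemma hs_comp_id F i x : (forall r, (r <= i)%N -> klinear phi (F r)) ->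
  hs_comp F hs_id i x = F i x.
Proof.
move=> FL; rewrite /hs_comp /adsum big_ord_recr /= subnn /= big1 ?add0r // => a _.
by rewrite /hs_id subn_eq0 leqNgt ltn_ord /=; apply/klinear0/FL/ltnW.
Qed.

Lemma hs_compA F G H i x : (forall r, (r <= i)%N -> klinear phi (F r)) ->
  hs_comp (hs_comp F G) H i x = hs_comp F (hs_comp G H) i x.
Proof.
move=> FL; rewrite /hs_comp (adsumA i (fun p q s => F p (G q (H s x)))).
by apply: eq_adsum => p p_le; rewrite (klinear_adsum _ _ (FL p p_le)).
Qed.

Lemma hs_comp_eql F F' G i x : (forall r, (r <= i)%N -> forall z, F r z = F' r z) ->
  hs_comp F G i x = hs_comp F' G i x.
Proof. by move=> eF; apply: eq_adsum => r r_le; rewrite eF. Qed.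

Lemma hs_comp_eqr F G G' i x : (forall r, (r <= i)%N -> forall z, G r z = G' r z) ->
  hs_comp F G i x = hs_comp F G' i x.
Proof. by move=> eG; apply: eq_adsum => r _; rewrite eG // leq_subr. Qed.

Lemma hs_comp_vanishing F G i x : (forall z, F 0%N z = z) -> (forall z, G 0%N z = z) ->
  (0 < i)%N -> vanishes_below F i -> hs_comp F G i x = F i x + G i x.
Proof.
move=> F0 G0 i_gt0 Fv.
rewrite /hs_comp /adsum (sum_ends (g := fun r => F r (G (i - r)%N x))) //.
  by rewrite subn0 subnn F0 G0 addrC.
by move=> r r_in; rewrite Fv.
Qed.

End HSGroup.

Section HSInverse.
Variables (k A : comPzRingType) (phi : {rmorphism k -> A}).
Variable H : nat -> A -> A.

(* The left inverse of H is determined recursively by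
   Hinv_0 = Id and Hinv_(i+1) = - sum_{a <= i} Hinv_a o H_(i+1-a).
   hs_inv_upto i lists Hinv_0, ..., Hinv_i (and is arbitrary beyond i). *)
Fixpoint hs_inv_upto (i : nat) : nat -> A -> A :=
  match i with
  | 0%N => fun j x => x
  | i'.+1 => fun j x => if (j <= i')%N then hs_inv_upto i' j x
                        else - \sum_(a < i'.+1) hs_inv_upto i' a (H (i'.+1 - a)%N x)
  end.

Definition hs_inv : nat -> A -> A := fun j => hs_inv_upto j j.

Lemma hs_inv_upto_stable i j x : (j <= i)%N -> hs_inv_upto i j x = hs_inv j x.
Proof.
elim: i => [|i IH] j_le; first by move: j_le; rewrite leqn0 => /eqP ->.
rewrite /=; case: ifP => j_lei; first exact: IH.
have -> : j = i.+1 by apply/eqP; rewrite eqn_leq j_le leqNgt ltnS j_lei.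
by rewrite /hs_inv /= ltnn.
Qed.

Lemma hs_invS i x : hs_inv i.+1 x = - \sum_(a < i.+1) hs_inv a (H (i.+1 - a)%N x).
Proof.
rewrite /hs_inv /= ltnn; congr (- _); apply: eq_bigr => a _.
by rewrite hs_inv_upto_stable // -ltnS.
Qed.

Hypothesis HH : isHSinf phi H.

Lemma hs_inv_left i x : hs_comp hs_inv H i x = hs_id i x.
Proof.
case: i => [|i]; first by rewrite /hs_comp adsum0 HH.1.
by rewrite /hs_comp /adsum big_ord_recr /= subnn HH.1 hs_invS /hs_id subrr.
Qed.

Lemma hs_inv_klinear i : klinear phi (hs_inv i).
Proof.
elim/ltn_ind: i => [[|i]] IH; first exact: klinear_id.
apply: (klinear_ext (fun x => hs_invS i x)); apply: klinear_opp.
apply: (klinear_sum (F := fun (a : 'I_i.+1) x => hs_inv a (H (i.+1 - a)%N x))) => a.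
by apply: klinear_comp; [apply: IH | apply: HH.2.1].
Qed.

(* Leibniz rule for the inverse, by strong induction: expanding
   (Hinv o H)_(i+1)(x y) = 0 by Leibniz rules for H and for the Hinv_a with
   a <= i isolates the defect of Hinv_(i+1). *)
Lemma hs_inv_leibniz i x y :
  hs_inv i (x * y) = adsum i (fun r s => hs_inv r x * hs_inv s y).
Proof.
elim/ltn_ind: i x y => [[|i]] IH x y; first by rewrite adsum0.
have expand := hs_comp_mul_expand hs_inv H x y i.+1.
have unit : adsum i.+1 (fun c d => hs_comp hs_inv H c x * hs_comp hs_inv H d y) = 0.
  rewrite (eq_adsum (g := fun c d => hs_id c x * hs_id d y)); last first.
    by move=> a _; rewrite !hs_inv_left.
  have [_ [_ id_mul]] := hs_id_HS phi.
  by rewrite -[adsum _ _]/(\sum_(r < i.+2) hs_id r x * hs_id (i.+1 - r)%N y) -id_mul.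
rewrite unit adsumS /= adsum0 in expand.
have low : adsum i (fun a b => adsum b.+1 (fun u v =>
              adsum a (fun p q => hs_inv p (H u x) * hs_inv q (H v y))))
           = - hs_inv i.+1 (x * y).
  rewrite hs_invS opprK {1}/adsum; apply: eq_bigr => a _.
  have a_le : (a <= i)%N by rewrite -ltnS.
  rewrite subSn // (isHSinf_leibniz _ _ _ HH) (klinear_adsum _ _ (hs_inv_klinear a)).
  by apply: eq_adsum => u _; rewrite IH // ltnS.
rewrite low !HH.1 in expand.
by move/esym/eqP: expand; rewrite addrC subr_eq0 => /eqP ->.
Qed.

Lemma hs_inv_HS : isHSinf phi hs_inv.
Proof. by split=> //; split=> i; [exact: hs_inv_klinear | exact: hs_inv_leibniz]. Qed.

End HSInverse.

Section Dilation.
Variables (k A : comPzRingType) (phi : {rmorphism k -> A}).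

(* The substitution t |-> t^n: (hs_dilate n E)_(jn) = E_j, zero elsewhere. *)
Definition hs_dilate (n : nat) (E : nat -> A -> A) : nat -> A -> A :=
  fun i x => if (n %| i)%N then E (i %/ n)%N x else 0.

Lemma hs_dilate_HS n E : (0 < n)%N -> isHSinf phi E -> isHSinf phi (hs_dilate n E).
Proof.
move=> n_gt0 HE; split; first by move=> x; rewrite /hs_dilate dvdn0 div0n HE.1.
split=> i.
  by rewrite /hs_dilate; case: (n %| i)%N; [apply: HE.2.1 | apply: klinear_zero].
move=> x y.
rewrite -[\sum_(r < i.+1) _]/(adsum i (fun r s => hs_dilate n E r x * hs_dilate n E s y)).
case: (boolP (n %| i)%N) => [n_i|n_Ni].
  have ei : i = (i %/ n * n)%N by rewrite divnK.
  rewrite /hs_dilate n_i (isHSinf_leibniz _ _ _ HE) [in RHS]ei -(adsum_dilate _ _ n_gt0).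
  apply: eq_adsum => r _.
  by case: (n %| r)%N; case: (n %| _)%N; rewrite /= ?mul0r ?mulr0.
rewrite /hs_dilate (negbTE n_Ni); symmetry; apply: big1 => r _.
have r_le : (r <= i)%N := ltn_ord r.
case: ifP => n_r; last by rewrite mul0r.
case: ifP => n_ir; last by rewrite mulr0.
have : (n %| i)%N by rewrite -(subnKC r_le) (dvdn_addr _ n_r) n_ir.
by rewrite (negbTE n_Ni).
Qed.

Lemma hs_dilate_vanishing n E : vanishes_below (hs_dilate n E) n.
Proof.
move=> i /andP[i_gt0 i_lt] x; rewrite /hs_dilate.
by case: ifP => // /(dvdn_leq i_gt0); rewrite leqNgt i_lt.
Qed.

Lemma hs_dilate_n n E x : (0 < n)%N -> hs_dilate n E n x = E 1%N x.
Proof. by move=> n_gt0; rewrite /hs_dilate dvdnn divnn n_gt0. Qed.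

End Dilation.

Section Integrability.
Variables (k A : comPzRingType) (phi : {rmorphism k -> A}).
Variable m : nat.

Lemma first_component_Der D n : isHS phi m D -> (0 < n <= m)%N ->
  vanishes_below D n -> isDer phi (D n).
Proof.
move=> HD /andP[n_gt0 n_le] Dv; split; first exact: HD.2.1.
move=> x y; rewrite (isHS_leibniz _ _ HD n_le) /adsum.
rewrite (sum_ends (g := fun r => D r x * D (n - r)%N y)) //.
  by rewrite subn0 subnn !HD.1.
by move=> r r_in; rewrite Dv ?mul0r.
Qed.

Lemma trivial_HS_integrable D : isHS phi m D -> vanishes_below D m.+1 ->
  exists G, isHSinf phi G /\ truncates_to m G D.
Proof.
move=> HD Dv; exists (@hs_id A); split; first exact: hs_id_HS.
by move=> [|i] i_le x; [rewrite HD.1 | rewrite Dv].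
Qed.

Hypothesis integrable : all_Der_integrable phi.

Lemma peel_lowest D n : isHS phi m D -> (0 < n <= m)%N -> vanishes_below D n ->
  exists H F, [/\ isHSinf phi H, isHS phi m F, vanishes_below F n.+1 &
    forall i, (i <= m)%N -> forall x, hs_comp F H i x = D i x].
Proof.
move=> HD n_in Dv; have /andP[n_gt0 n_le] := n_in.
have [E [HE E1]] := integrable (first_component_Der HD n_in Dv).
pose H := hs_dilate n E.
have HH : isHSinf phi H := hs_dilate_HS n_gt0 HE.
pose F := hs_comp D (hs_inv H).
have HF : isHS phi m F := hs_comp_HS HD ((isHSinfP _ _).1 (hs_inv_HS HH) m).
have FH i : (i <= m)%N -> forall x, hs_comp F H i x = D i x.
  move=> i_le x.
  have DL r : (r <= i)%N -> klinear phi (D r).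
    by move=> r_le; apply: HD.2.1; apply: leq_trans i_le.
  rewrite (hs_compA _ _ _ DL) (@hs_comp_eqr _ _ _ (@hs_id A)) ?(hs_comp_id _ DL) //.
  by move=> r _ z; apply: (hs_inv_left HH).
exists H, F; split=> //.
suff Fv i : (i <= n)%N -> vanishes_below F i.+1.
  exact: Fv.
elim: i => [|i IH] i_le; first by move=> [|r] /andP[].
have Fv_i := IH (ltnW i_le).
have i_m : (i.+1 <= m)%N by apply: leq_trans n_le.
have sum_i x : D i.+1 x = F i.+1 x + H i.+1 x.
  by rewrite -FH // (hs_comp_vanishing x HF.1 HH.1).
move=> r /andP[r_gt0]; rewrite ltnS leq_eqVlt => /orP[/eqP ->|r_lt] x; last first.
  by apply: Fv_i; rewrite r_gt0.
apply: (addIr (H i.+1 x)); rewrite -sum_i add0r.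
case: (ltngtP i.+1 n) i_le => [i_lt|//|en] _.
  have i_in : (0 < i.+1 < n)%N by [].
  by rewrite Dv // /H hs_dilate_vanishing.
by rewrite en /H hs_dilate_n // E1.
Qed.

Lemma HS_integrable_vanishing d : forall n D, (0 < n)%N -> (m < n + d)%N ->
  isHS phi m D -> vanishes_below D n ->
  exists G, isHSinf phi G /\ truncates_to m G D.
Proof.
elim: d => [|d IH] n D n_gt0 m_lt HD Dv.
  rewrite addn0 in m_lt; apply: trivial_HS_integrable => // i /andP[i_gt0 i_le] x.
  by apply: Dv; rewrite i_gt0 (leq_trans i_le m_lt).
case: (ltnP m n) => [m_lt_n|n_le].
  apply: trivial_HS_integrable => // i /andP[i_gt0 i_le] x.
  by apply: Dv; rewrite i_gt0 (leq_trans i_le m_lt_n).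
have n_in : (0 < n <= m)%N by rewrite n_gt0 n_le.
have [H [F [HH HF Fv FH]]] := peel_lowest HD n_in Dv.
have m_lt' : (m < n.+1 + d)%N by rewrite addSnnS.
have [G [HG GF]] := IH n.+1 F (ltn0Sn _) m_lt' HF Fv.
exists (hs_comp G H); split.
  by apply/isHSinfP => m'; apply: hs_comp_HS; exact: (isHSinfP _ _).1.
move=> i i_le x; rewrite -FH //; apply: hs_comp_eql => r r_le z.
by apply: GF; apply: leq_trans i_le.
Qed.

Lemma HS_integrable D : isHS phi m D -> exists G, isHSinf phi G /\ truncates_to m G D.
Proof.
move=> HD; apply: (@HS_integrable_vanishing m 1%N) => //.
by move=> [|i] /andP[].
Qed.

End Integrability.

Close Scope ring_scope.

Theorem mainTheorem2 (k A : comPzRingType) (phi : {rmorphism k -> A}) :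
  Der_fg phi -> all_Der_integrable phi ->
  forall m : nat, (1 <= m)%N ->
  forall D' : nat -> A -> A, isHS phi m D' ->
    (exists D, isHS phi m.+1 D /\ truncates_to m D D') /\
    (exists D, isHSinf phi D /\ truncates_to m D D').
Proof.
move=> _ integrable m _ D' HD'.
have [G [HG GD']] := HS_integrable integrable HD'.
by split; exists G; split=> //; apply: (isHSinfP _ _).1.
Qed.
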